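(* Let $\mathcal{M}=((X,\mathcal{C}),\mathcal{V})$ be a closure model and let $f:X\to X/{\equiv_{IML}}$ map each point to its $\equiv_{IML}$-equivalence class. For all $x_1,x_2\in X$ and $A\subseteq X$: if $x_1\equiv_{IML}x_2$ and $x_1\in\mathcal{C}(A)$, then $x_2\in\mathcal{C}(f^{-1}(f[A]))$.
   Context: Closure space $(X,\mathcal{C})$: $X$ non-empty, $\mathcal{C}(\emptyset)=\emptyset$, $A\subseteq\mathcal{C}(A)$, $\mathcal{C}(A_1\cup A_2)=\mathcal{C}(A_1)\cup\mathcal{C}(A_2)$; closure model adds $\mathcal{V}:AP\to\mathcal{P}(X)$. IML formulas: $\Phi::=p\mid\neg\Phi\mid\bigwedge_{i\in I}\Phi_i\mid\mathcal{N}\Phi$ ($I$ any set); $x\models p$ iff $x\in\mathcal{V}(p)$, negation and conjunction standard, $x\models\mathcal{N}\Phi$ iff $x\in\mathcal{C}(\{y\mid y\models\Phi\})$. $x_1\equiv_{IML}x_2$ iff they satisfy the same IML formulas. $f[A]=\{f(a)\mid a\in A\}$, $f^{-1}(B)=\{x\mid f(x)\in B\}$. *)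

Record is_closure (X : Type) (C : (X -> Prop) -> (X -> Prop)) : Prop := {
  closure_empty : forall x, ~ C (fun _ => False) x;
  closure_extensive : forall (A : X -> Prop) x, A x -> C A x;
  closure_union : forall (A1 A2 : X -> Prop) x,
      C (fun y => A1 y \/ A2 y) x <-> (C A1 x \/ C A2 x)
}.

Inductive iml_form (AP : Type) : Type :=
| fAtom : AP -> iml_form AP
| fNeg : iml_form AP -> iml_form AP
| fAnd : forall (I : Type), (I -> iml_form AP) -> iml_form AP
| fNear : iml_form AP -> iml_form AP.

Arguments fAtom {AP} _.
Arguments fNeg {AP} _.
Arguments fAnd {AP} _ _.
Arguments fNear {AP} _.

Fixpoint sat {X AP : Type} (C : (X -> Prop) -> (X -> Prop)) (V : AP -> X -> Prop)
    (x : X) (phi : iml_form AP) {struct phi} : Prop :=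
  match phi with
  | fAtom p => V p x
  | fNeg psi => ~ sat C V x psi
  | fAnd J phis => forall i : J, sat C V x (phis i)
  | fNear psi => C (fun y => sat C V y psi) x
  end.

Definition iml_equiv {X AP : Type} (C : (X -> Prop) -> (X -> Prop))
    (V : AP -> X -> Prop) (x1 x2 : X) : Prop :=
  forall phi : iml_form AP, sat C V x1 phi <-> sat C V x2 phi.

(* The quotient map f : X -> X/≡_IML, sending x to its equivalence class
   (represented as the predicate of points equivalent to x). *)
Definition iml_class {X AP : Type} (C : (X -> Prop) -> (X -> Prop))
    (V : AP -> X -> Prop) (x : X) : X -> Prop :=
  fun y => iml_equiv C V x y.

Definition image {X Y : Type} (f : X -> Y) (A : X -> Prop) : Y -> Prop :=
  fun y => exists a, A a /\ f a = y.
Definition preimage {X Y : Type} (f : X -> Y) (B : Y -> Prop) : X -> Prop :=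
  fun x => B (f x).

(* Write B := f^{-1}(f[A]); a point z lies in B exactly when z is
   IML-equivalent to some a in A.  Using classical logic, every point y has a
   characteristic formula delta y, an infinitary conjunction of formulas that
   separate y from each point not equivalent to it, so that z |= delta y iff
   y ≡ z.  The infinitary disjunction of the delta a over a in A (encoded with
   negation and conjunction) therefore defines B.  Since A ⊆ B and closure
   operators are monotone, x1 ∈ C(B), i.e. x1 |= N(defining formula of B); the
   equivalence x1 ≡ x2 transfers this formula to x2, giving x2 ∈ C(B). *)

From Stdlib Require Import Classical ClassicalEpsilon FunctionalExtensionality PropExtensionality.

Section IMLDefinability.
Variables (X AP : Type) (C : (X -> Prop) -> (X -> Prop)) (V : AP -> X -> Prop).

Notation equiv := (iml_equiv C V).

Lemma iml_equiv_refl x : equiv x x.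
Proof. intros phi; tauto. Qed.

Lemma iml_equiv_sym x y : equiv x y -> equiv y x.
Proof. intros H phi; specialize (H phi); tauto. Qed.

Lemma iml_equiv_trans x y z : equiv x y -> equiv y z -> equiv x z.
Proof. intros H1 H2 phi; specialize (H1 phi); specialize (H2 phi); tauto. Qed.

(* Inequivalent points are separated by a formula true at the first one
   (negation lets us orient a distinguishing formula). *)
Lemma separating_formula y z :
  ~ equiv y z -> exists psi, sat C V y psi /\ ~ sat C V z psi.
Proof.
  intros Hyz. apply NNPP; intros Hnone. apply Hyz. intros phi. split; intros Hphi.
  - apply NNPP; intros Hz. apply Hnone. now exists phi.
  - apply NNPP; intros Hy. apply Hnone. exists (fNeg phi); simpl; auto.
Qed.

Definition separator (y z : X) (Hyz : ~ equiv y z) : iml_form AP :=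
  proj1_sig (constructive_indefinite_description _ (separating_formula y z Hyz)).

Lemma separator_spec y z (Hyz : ~ equiv y z) :
  sat C V y (separator y z Hyz) /\ ~ sat C V z (separator y z Hyz).
Proof. exact (proj2_sig (constructive_indefinite_description _ (separating_formula y z Hyz))). Qed.

Definition char_form (y : X) : iml_form AP :=
  fAnd {z : X | ~ equiv y z} (fun zs => separator y (proj1_sig zs) (proj2_sig zs)).

Lemma char_form_spec y z : sat C V z (char_form y) <-> equiv y z.
Proof.
  split.
  - intros Hz. apply NNPP; intros Hyz.
    exact (proj2 (separator_spec y z Hyz) (Hz (exist _ z Hyz))).
  - intros Hyz [w Hyw]. apply Hyz. exact (proj1 (separator_spec y w Hyw)).
Qed.

Definition saturation_form (A : X -> Prop) : iml_form AP :=
  fNeg (fAnd {a : X | A a} (fun a => fNeg (char_form (proj1_sig a)))).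

Lemma saturation_form_spec A z :
  sat C V z (saturation_form A) <-> exists a, A a /\ equiv a z.
Proof.
  simpl. split.
  - intros Hz. apply NNPP; intros Hnone. apply Hz. intros [a Ha] Hchar.
    apply Hnone. exists a. split; [exact Ha | exact (proj1 (char_form_spec a z) Hchar)].
  - intros [a [Ha Haz]] Hall. apply (Hall (exist _ a Ha)), char_form_spec, Haz.
Qed.

Lemma preimage_image_class A z :
  preimage (iml_class C V) (image (iml_class C V) A) z <-> exists a, A a /\ equiv a z.
Proof.
  unfold preimage, image. split.
  - intros [a [Ha Hclass]]. exists a. split; [exact Ha |].
    change (iml_class C V a z). rewrite Hclass. apply iml_equiv_refl.
  - intros [a [Ha Haz]]. exists a. split; [exact Ha |].
    apply functional_extensionality; intros w. apply propositional_extensionality.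
    split; intros H.
    + exact (iml_equiv_trans _ _ _ (iml_equiv_sym _ _ Haz) H).
    + exact (iml_equiv_trans _ _ _ Haz H).
Qed.

Lemma saturation_definable A z :
  sat C V z (saturation_form A) <-> preimage (iml_class C V) (image (iml_class C V) A) z.
Proof. rewrite saturation_form_spec, preimage_image_class. reflexivity. Qed.

End IMLDefinability.

Lemma operator_ext (X : Type) (C : (X -> Prop) -> (X -> Prop)) (A B : X -> Prop) x :
  (forall y, A y <-> B y) -> C A x -> C B x.
Proof.
  intros HAB HA.
  replace B with A; [exact HA |].
  apply functional_extensionality; intros y. apply propositional_extensionality, HAB.
Qed.

(* Closure operators are monotone: C(B) = C(A ∪ B) ⊇ C(A) when A ⊆ B. *)
Lemma closure_monotone (X : Type) (C : (X -> Prop) -> (X -> Prop)) (HC : is_closure X C)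
    (A B : X -> Prop) x :
  (forall y, A y -> B y) -> C A x -> C B x.
Proof.
  intros HAB HA.
  apply (operator_ext X C (fun y => A y \/ B y)).
  - intros y. split; [intros [Ha | Hb]; auto | auto].
  - apply (closure_union _ _ HC). now left.
Qed.

Theorem lemma10 (X AP : Type) (C : (X -> Prop) -> (X -> Prop))
    (V : AP -> X -> Prop) (HC : is_closure X C)
    (x1 x2 : X) (A : X -> Prop) :
  iml_equiv C V x1 x2 ->
  C A x1 ->
  C (preimage (iml_class C V) (image (iml_class C V) A)) x2.
Proof.
  intros H12 HA.
  set (B := preimage (iml_class C V) (image (iml_class C V) A)).
  set (phi := saturation_form X AP C V A).
  assert (Hdef : forall z, sat C V z phi <-> B z) by apply saturation_definable.
  assert (HB1 : C B x1).
  { apply (closure_monotone X C HC A); [| exact HA].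
    intros a Ha. apply preimage_image_class. exists a. split; [exact Ha | apply iml_equiv_refl]. }
  assert (Hnear1 : sat C V x1 (fNear phi)).
  { apply (operator_ext X C B); [intros z; symmetry; apply Hdef | exact HB1]. }
  apply (operator_ext X C (fun z => sat C V z phi)); [exact Hdef |].
  exact (proj1 (H12 (fNear phi)) Hnear1).
Qed.
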